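(* Let $\mathfrak g$ be of type $A_n$ with $n\ge 2$ and let $r=\frac{n+1}{\gcd(n+1,2)}$. Then the cardinality of $\Psi_{\min}$ equals the number of minimal $n$-sequences of type $r$.
   Context: For $\mathfrak g$ of type $A_n$ with fundamental weights $\lambda_1,\dots,\lambda_n$ (labelled along the Dynkin diagram $1-2-\cdots-n$), root lattice $Q$ and dominant weights $\Lambda^+=\bigoplus_i\mathbb N\lambda_i$, let $\Psi=\{\lambda\in\Lambda^+: 2\lambda\in Q\}$ and $\Psi_{\min}=\{\lambda\in\Psi\setminus\{0\}:\lambda\ne\mu_1+\mu_2\text{ for all }\mu_1,\mu_2\in\Psi\setminus\{0\}\}$. An $n$-sequence is an $n$-tuple $\mathbf t=(t_1,\dots,t_n)$ of nonnegative integers; set $|\mathbf t|=t_1+2t_2+\cdots+nt_n$. For $k\in\mathbb Z_{>0}$, $\mathbf t$ is of type $k$ if $k\mid|\mathbf t|$, and an $n$-sequence of type $k$ is minimal if $\mathbf t\neq(0,\dots,0)$ and $\mathbf t$ is not the (componentwise) sum of two nonzero $n$-sequences of type $k$. *)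

From mathcomp Require Import all_boot all_order all_algebra.
Set Implicit Arguments. Unset Strict Implicit. Unset Printing Implicit Defensive.
Import GRing.Theory Num.Theory.

(* Type A_n.  A weight sum_i m_i lambda_i is encoded by its coordinates in
   the basis of fundamental weights; index i : 'I_n stands for lambda_(i+1). *)

(* Cartan matrix of A_n: the simple root alpha_j has lambda-coordinates
   (cartanA i j)_i, i.e. alpha_j = 2 lambda_j - lambda_(j-1) - lambda_(j+1). *)
Definition cartanA (n : nat) (i j : 'I_n) : int :=
  if i == j then Posz 2
  else if (i.+1 == j :> nat) || (j.+1 == i :> nat) then Negz 0 else Posz 0.

Definition in_root_lattice (n : nat) (v : 'I_n -> int) : Prop :=
  exists c : 'I_n -> int, forall i : 'I_n, v i = (\sum_(j < n) c j * cartanA i j)%R.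

(* dominant weights: n-tuples of naturals (coefficients of lambda_1..lambda_n) *)
Definition is_zero_tuple (n : nat) (t : n.-tuple nat) : Prop :=
  forall i : 'I_n, tnth t i = 0%N.

Definition tuple_sum (n : nat) (t u v : n.-tuple nat) : Prop :=
  forall i : 'I_n, tnth t i = (tnth u i + tnth v i)%N.

Definition inPsi (n : nat) (t : n.-tuple nat) : Prop :=
  in_root_lattice (fun i : 'I_n => Posz (2 * tnth t i)%N).

Definition inPsi_min (n : nat) (t : n.-tuple nat) : Prop :=
  inPsi t /\ ~ is_zero_tuple t /\
  ~ (exists u v : n.-tuple nat,
        inPsi u /\ ~ is_zero_tuple u /\ inPsi v /\ ~ is_zero_tuple v /\
        tuple_sum t u v).

Definition seq_weight (n : nat) (t : n.-tuple nat) : nat :=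
  \sum_(i < n) (i.+1 * tnth t i)%N.

Definition of_type (n k : nat) (t : n.-tuple nat) : Prop :=
  (k %| seq_weight t)%N.

Definition minimal_of_type (n k : nat) (t : n.-tuple nat) : Prop :=
  of_type k t /\ ~ is_zero_tuple t /\
  ~ (exists u v : n.-tuple nat,
        of_type k u /\ ~ is_zero_tuple u /\ of_type k v /\ ~ is_zero_tuple v /\
        tuple_sum t u v).

From mathcomp Require Import all_boot all_order all_algebra zify ring.
From Stdlib Require Import ClassicalEpsilon.
Set Implicit Arguments. Unset Strict Implicit. Unset Printing Implicit Defensive.
Import GRing.Theory Num.Theory.

(** A weight [sum_i m_i lambda_i] of [A_n] lies in the root lattice [Q] iff
    [sum_i i m_i] is divisible by [n + 1]: this pairing kills every simple root
    but [alpha_n], which it sends to [n + 1], and conversely every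
    [lambda_k - k lambda_1] lies in [Q].  Hence [lambda \in Psi] iff
    [n + 1 | 2 |lambda|], i.e. iff [r | |lambda|], so [Psi] is exactly the set of
    [n]-sequences of type [r] and the two sets of minimal elements coincide.
    They are finite since a minimal sequence of type [r] has all entries
    [<= r]: otherwise [r] times a unit vector splits off. *)

Local Open Scope ring_scope.

Section RootLattice.

Variable n : nat.
Implicit Types (i j : 'I_n) (v w : 'I_n -> int).

Lemma eq_in_root_lattice v w : v =1 w -> in_root_lattice v -> in_root_lattice w.
Proof. by move=> vw [c hc]; exists c => i; rewrite -vw. Qed.

Lemma in_root_latticeD v w :
  in_root_lattice v -> in_root_lattice w -> in_root_lattice (fun i => v i + w i).
Proof.
move=> [c hc] [d hd]; exists (fun j => c j + d j) => i.
by rewrite hc hd -big_split; apply: eq_bigr => j _; rewrite mulrDl.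
Qed.

Lemma in_root_latticeZ z v : in_root_lattice v -> in_root_lattice (fun i => z * v i).
Proof.
move=> [c hc]; exists (fun j => z * c j) => i.
by rewrite hc mulr_sumr; apply: eq_bigr => j _; rewrite mulrA.
Qed.

Lemma in_root_lattice_sum (a : 'I_n -> int) (g : 'I_n -> 'I_n -> int) :
  (forall k, in_root_lattice (g k)) -> in_root_lattice (fun i => \sum_k a k * g k i).
Proof.
move=> /fin_all_exists[c hc]; exists (fun j => \sum_k a k * c k j) => i.
under eq_bigr => k _ do rewrite hc mulr_sumr.
rewrite exchange_big; apply: eq_bigr => j _.
by rewrite mulr_suml; apply: eq_bigr => k _; rewrite mulrA.
Qed.

Lemma in_root_lattice_cartan j : in_root_lattice (fun i => cartanA i j).
Proof.
exists (fun k => (k == j)%:R) => i.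
by rewrite (bigD1 j) //= eqxx mul1r big1 ?addr0 // => k /negbTE->; rewrite mul0r.
Qed.

(** [fweight k] is [lambda_(k+1)], read as [0] when [k >= n]. *)
Definition fweight (k : nat) : 'I_n -> int := fun i => ((i : nat) == k)%:Z.

Lemma sum_fweight (F : nat -> int) k :
  \sum_(i < n) F i * fweight k i = if (k < n)%N then F k else 0.
Proof.
rewrite /fweight; case: ifPn => [kn | kNn].
  rewrite (bigD1 (Ordinal kn)) //= eqxx mulr1 big1 ?addr0 // => i ik.
  by case: eqP => [ik' | _]; [case/eqP: ik; apply: val_inj | rewrite mulr0].
by rewrite big1 // => i _; case: eqP => [ik | _]; [rewrite -ik ltn_ord in kNn | rewrite mulr0].
Qed.

Lemma cartanAE i j :
  cartanA i j = 2 * fweight j i - (0 < j)%N%:Z * fweight j.-1 i - fweight j.+1 i.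
Proof.
rewrite /cartanA /fweight -(inj_eq val_inj) /=.
move: (nat_of_ord i) (nat_of_ord j) => x [|y] /=.
all: rewrite ?eqSS ?(eq_sym 1%N) ?(eq_sym y.+2); do ![case: eqP => ? /=]; lia.
Qed.

(** [weight_class v] modulo [n + 1] is the class of [v] in [Lambda / Q = Z / (n + 1)]. *)
Definition weight_class v : int := \sum_(i < n) (i.+1)%:R * v i.

Lemma weight_class_cartan j :
  weight_class (fun i => cartanA i j) = n.+1%:R * (j.+1 == n)%:Z.
Proof.
have distr (x a b c d : int) : x * (2 * a - b * c - d) = 2 * (x * a) - b * (x * c) - x * d.
  by ring.
rewrite /weight_class; under eq_bigr => i _ do rewrite cartanAE distr.
rewrite !sumrB -!mulr_sumr !(sum_fweight (fun k : nat => k.+1%:R)) ltn_ord.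
by have := ltn_ord j; case: (nat_of_ord j) => [|j'] jn /=;
  rewrite ?natz; do 2 case: ifP; lia.
Qed.

Lemma root_lattice_weight_class v :
  in_root_lattice v -> (n.+1%:R %| weight_class v)%Z.
Proof.
move=> [c hc]; rewrite /weight_class.
under eq_bigr => i _ do rewrite hc mulr_sumr.
rewrite exchange_big rpred_sum // => j _.
under eq_bigr => i _ do rewrite mulrCA.
by rewrite -mulr_sumr -/(weight_class _) weight_class_cartan dvdz_mull ?dvdz_mulr.
Qed.

(** [lambda_(k+2) = 2 lambda_(k+1) - lambda_k - alpha_(k+1)], and [lambda_k - k lambda_1]
    obeys the same recursion. *)
Lemma in_root_lattice_fweight k : (k <= n)%N ->
  in_root_lattice (fun i => fweight k i - k.+1%:R * fweight 0 i).
Proof.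
pose g m i := fweight m i - m.+1%:R * fweight 0 i.
have step m : (m.+1 < n)%N ->
    in_root_lattice (g m) -> in_root_lattice (g m.+1) -> in_root_lattice (g m.+2).
  move=> mn gm gm1.
  have := in_root_latticeD (in_root_latticeD (in_root_latticeZ 2 gm1)
    (in_root_latticeZ (-1) gm)) (in_root_latticeZ (-1) (in_root_lattice_cartan (Ordinal mn))).
  apply: eq_in_root_lattice => i; rewrite cartanAE /g /=.
  by ring.
have g0 : in_root_lattice (g 0%N).
  by exists (fun _ => 0) => i; rewrite big1 /g => *; ring.
suff {k} gP k : (k < n)%N -> in_root_lattice (g k) /\ in_root_lattice (g k.+1).
  by case: k => [|k] kn //; case: (gP k kn).
elim: k => [|k IH] kn.
  split=> //; apply: eq_in_root_lattice (in_root_latticeZ (-1) (in_root_lattice_cartan (Ordinal kn))) => i.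
  by rewrite cartanAE /g /=; ring.
have [gk gk1] := IH (ltnW kn).
by split; last exact: step.
Qed.

Lemma in_root_latticeP v : (0 < n)%N ->
  in_root_lattice v <-> (n.+1%:R %| weight_class v)%Z.
Proof.
move=> n_gt0; split; first exact: root_lattice_weight_class.
case/dvdzP => q wv.
have := in_root_latticeD
  (in_root_lattice_sum v (fun k => in_root_lattice_fweight (ltnW (ltn_ord k))))
  (in_root_latticeZ (- q) (in_root_lattice_fweight (leqnn n))).
apply: eq_in_root_lattice => i /=.
have vi : \sum_(k < n) v k * fweight k i = v i.
  rewrite (bigD1 i) //= /fweight eqxx mulr1 big1 ?addr0 // => k ki.
  by rewrite eq_sym (inj_eq (@ord_inj n)) (negbTE ki) mulr0.
have wc : \sum_(k < n) v k * (k.+1%:R * fweight 0 i) = weight_class v * fweight 0 i.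
  by rewrite /weight_class mulr_suml; apply: eq_bigr => k _; ring.
have -> : fweight n i = 0 by rewrite /fweight ltn_eqF.
under eq_bigr => k _ do rewrite mulrBr.
by rewrite sumrB vi wc wv; ring.
Qed.

Lemma weight_class_double (t : n.-tuple nat) :
  weight_class (fun i => Posz (2 * tnth t i)%N) = Posz (2 * seq_weight t)%N.
Proof.
rewrite /seq_weight big_distrr /= -natz natr_sum; apply: eq_bigr => i _.
by rewrite -!natz -natrM mulnCA.
Qed.

Lemma inPsiE (t : n.-tuple nat) : (0 < n)%N -> inPsi t <-> (n.+1 %| 2 * seq_weight t)%N.
Proof. by move=> n_gt0; rewrite /inPsi in_root_latticeP // weight_class_double natz. Qed.

End RootLattice.

Local Close Scope ring_scope.

Lemma dvdn_double_divgcd m w : 0 < m -> (m %| 2 * w) = (m %/ gcdn m 2 %| w).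
Proof.
move=> m_gt0; rewrite -gcdn_modl modn2.
case m_odd: (odd m) => /=.
  by rewrite divn1 Gauss_dvdr // /coprime -gcdn_modl modn2 m_odd.
have -> : m = 2 * (m %/ 2) by rewrite mulnC divnK // dvdn2 m_odd.
by rewrite dvdn_pmul2l // mulKn.
Qed.

Lemma inPsi_of_type n (t : n.-tuple nat) : 0 < n ->
  inPsi t <-> of_type (n.+1 %/ gcdn n.+1 2) t.
Proof. by move=> n_gt0; rewrite inPsiE // /of_type -dvdn_double_divgcd. Qed.

Section Minimality.

Variable n : nat.
Implicit Types (P Q : n.-tuple nat -> Prop) (t u v : n.-tuple nat).

Definition minimal_in P t : Prop :=
  P t /\ ~ is_zero_tuple t /\
  ~ (exists u v, P u /\ ~ is_zero_tuple u /\ P v /\ ~ is_zero_tuple v /\ tuple_sum t u v).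

Lemma eq_minimal_in P Q :
  (forall t, P t <-> Q t) -> forall t, minimal_in P t <-> minimal_in Q t.
Proof.
move=> PQ t; rewrite /minimal_in PQ.
split=> -[Qt [t_nz t_min]]; do 2!split=> //;
  by move=> [u [v]]; rewrite ?PQ => uv; apply: t_min; exists u, v; rewrite ?PQ.
Qed.

Lemma seq_weightD t u v : tuple_sum t u v -> seq_weight t = seq_weight u + seq_weight v.
Proof. by move=> tuv; rewrite -big_split; apply: eq_bigr => i _; rewrite tuv mulnDr. Qed.

Lemma minimal_of_type_le k :
  0 < k -> forall t, minimal_of_type k t -> forall i, tnth t i <= k.
Proof.
move=> k_gt0 t [t_type [t_nz t_min]] i; rewrite leqNgt; apply/negP => t_gt; apply: t_min.
pose u := [tuple if j == i then k else 0 | j < n].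
have u_type : of_type k u.
  rewrite /of_type /seq_weight (bigD1 i) //= tnth_mktuple eqxx.
  rewrite big1 ?addn0 ?dvdn_mull // => j /negbTE ji.
  by rewrite tnth_mktuple ji muln0.
exists u, [tuple tnth t j - tnth u j | j < n].
have tuv : tuple_sum t u [tuple tnth t j - tnth u j | j < n].
  by move=> j; rewrite !tnth_mktuple; case: eqP => [->|_]; lia.
split=> //; split; first by move/(_ i); rewrite tnth_mktuple eqxx; lia.
split; first by rewrite /of_type -(dvdn_addr _ u_type) -(seq_weightD tuv).
by split=> //; move/(_ i); rewrite !tnth_mktuple eqxx; lia.
Qed.

End Minimality.

Lemma uniq_enum_of_sub (T : eqType) (P : T -> Prop) (s : seq T) :
  (forall x, P x -> x \in s) -> exists s', uniq s' /\ forall x, x \in s' <-> P x.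
Proof.
move=> Ps; pose p x := if excluded_middle_informative (P x) then true else false.
have pP x : p x <-> P x by rewrite /p; case: excluded_middle_informative.
exists (undup (filter p s)); split=> [|x]; first exact: undup_uniq.
rewrite mem_undup mem_filter; split=> [/andP[/pP] //| Px].
by rewrite Ps // andbT; apply/pP.
Qed.

Lemma uniq_enum_of_bounded n b (P : n.-tuple nat -> Prop) :
  (forall t, P t -> forall i, tnth t i <= b) ->
  exists s, uniq s /\ forall t, t \in s <-> P t.
Proof.
move=> Pb; pose s := [seq map_tuple (@nat_of_ord b.+1) x | x <- enum {: n.-tuple 'I_b.+1}].
apply: (uniq_enum_of_sub (s := s)).
move=> t Pt; apply/mapP; exists (map_tuple inord t); first by rewrite mem_enum.
by apply: eq_from_tnth => i; rewrite !tnth_map inordK ?ltnS ?Pb.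
Qed.

Unset Implicit Arguments.
Theorem theorem4p4 (n : nat) (hn : (2 <= n)%N) :
  let r := ((n.+1) %/ gcdn n.+1 2)%N in
  exists (s1 s2 : seq (n.-tuple nat)),
    [/\ uniq s1, (forall t, t \in s1 <-> inPsi_min t),
        uniq s2, (forall t, t \in s2 <-> minimal_of_type r t)
      & size s1 = size s2].
Proof.
move=> r.
have n_gt0 : 0 < n by apply: leq_trans hn.
have r_gt0 : 0 < r by rewrite divn_gt0 ?gcdn_gt0 // dvdn_leq ?dvdn_gcdl.
have [s [s_uniq s_mem]] := uniq_enum_of_bounded (minimal_of_type_le r_gt0 (n := n)).
exists s, s; split=> // t; rewrite s_mem.
change (minimal_in (of_type r) t <-> minimal_in (@inPsi n) t).
by apply: eq_minimal_in => u; rewrite inPsi_of_type.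
Qed.
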